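(* Consider an $SU(2)$ monopole $(\nabla,\Phi)$ on $E\to\mathbb R^3$ and fix $O\in\mathbb R^3$. For an oriented line $\gamma$ that is not a spectral line, let $x$ be the point of $\gamma$ closest to $O$, and let $L^\pm_\gamma\subset E_x$ be the (one-dimensional) subspaces of initial values at $x$ of solutions of $(\nabla_{\dot\gamma}-i\Phi)s=0$ along $\gamma$ decaying at the positive, respectively negative, end of $\gamma$, so $E_x=L^+_\gamma\oplus L^-_\gamma$. Define $M_\gamma:E_x\to E_x$ to be $+1$ on $L^+_\gamma$ and $-1$ on $L^-_\gamma$. Then there are constants $R,C>0$ such that $\|M_\gamma\|\le C$ for all non-spectral lines $\gamma$ with $\|x-O\|\ge R$.
   Context: An $SU(2)$ monopole of charge $k$ on $\mathbb R^3$: $SU(2)$ connection $\nabla$ and Higgs field $\Phi$ on rank-2 $SU(2)$ bundle $E$ with $F_\nabla=*\nabla\Phi$ and Hitchin's boundary conditions $\|\Phi\|=1-k/2r+O(r^{-2})$, $\|\nabla\Phi\|=O(r^{-2})$; in particular there is a unitary gauge diagonalising $\Phi$ in which the connection matrix is $\begin{pmatrix}A&B\\-B^*&-A\end{pmatrix}$ with $B=O(r^{-2})$ ($r$ = distance from $O$). A spectral line is an oriented line along which a nonzero solution of $(\nabla_{\dot\gamma}-i\Phi)s=0$ decays at both ends. Norms are the Hermitian norms on $E_x$. *)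

From Stdlib Require Import Reals List.
From Coquelicot Require Import Coquelicot.
Open Scope R_scope.

Definition R3 : Type := (R * R * R)%type.
Definition coord (i : nat) (x : R3) : R :=
  match i with 0%nat => fst (fst x) | 1%nat => snd (fst x) | _ => snd x end.
Definition add3 (x y : R3) : R3 :=
  (fst (fst x) + fst (fst y), snd (fst x) + snd (fst y), snd x + snd y).
Definition sub3 (x y : R3) : R3 :=
  (fst (fst x) - fst (fst y), snd (fst x) - snd (fst y), snd x - snd y).
Definition scal3 (t : R) (x : R3) : R3 :=
  (t * fst (fst x), t * snd (fst x), t * snd x).
Definition dot3 (x y : R3) : R :=
  fst (fst x) * fst (fst y) + snd (fst x) * snd (fst y) + snd x * snd y.
Definition norm3 (x : R3) : R := sqrt (dot3 x x).
Definition e3 (i : nat) : R3 :=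
  match i with 0%nat => (1, 0, 0) | 1%nat => (0, 1, 0) | _ => (0, 0, 1) end.

Definition pd (i : nat) (f : R3 -> R) (x : R3) : R :=
  Derive (fun t => f (add3 x (scal3 t (e3 i)))) 0.
Fixpoint iter_pd (l : list nat) (f : R3 -> R) : R3 -> R :=
  match l with nil => f | i :: l' => pd i (iter_pd l' f) end.
Definition smoothR (f : R3 -> R) : Prop :=
  forall (l : list nat) (i : nat) (x : R3),
    ex_derive (fun t => iter_pd l f (add3 x (scal3 t (e3 i)))) 0 /\
    continuous (iter_pd l f) x.

Definition V2 : Type := (C * C)%type.
Record M2 : Type := mkM2 { m11 : C; m12 : C; m21 : C; m22 : C }.

Definition vadd (v w : V2) : V2 := (Cplus (fst v) (fst w), Cplus (snd v) (snd w)).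
Definition vsub (v w : V2) : V2 := (Cminus (fst v) (fst w), Cminus (snd v) (snd w)).
Definition vzero : V2 := (RtoC 0, RtoC 0).
Definition vnorm (v : V2) : R := sqrt (Cmod (fst v) ^ 2 + Cmod (snd v) ^ 2).

Definition mv (M : M2) (v : V2) : V2 :=
  (Cplus (Cmult (m11 M) (fst v)) (Cmult (m12 M) (snd v)),
   Cplus (Cmult (m21 M) (fst v)) (Cmult (m22 M) (snd v))).
Definition madd (M N : M2) : M2 :=
  mkM2 (Cplus (m11 M) (m11 N)) (Cplus (m12 M) (m12 N))
       (Cplus (m21 M) (m21 N)) (Cplus (m22 M) (m22 N)).
Definition msub (M N : M2) : M2 :=
  mkM2 (Cminus (m11 M) (m11 N)) (Cminus (m12 M) (m12 N))
       (Cminus (m21 M) (m21 N)) (Cminus (m22 M) (m22 N)).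
Definition mscal (c : C) (M : M2) : M2 :=
  mkM2 (Cmult c (m11 M)) (Cmult c (m12 M)) (Cmult c (m21 M)) (Cmult c (m22 M)).
Definition mmul (M N : M2) : M2 :=
  mkM2 (Cplus (Cmult (m11 M) (m11 N)) (Cmult (m12 M) (m21 N)))
       (Cplus (Cmult (m11 M) (m12 N)) (Cmult (m12 M) (m22 N)))
       (Cplus (Cmult (m21 M) (m11 N)) (Cmult (m22 M) (m21 N)))
       (Cplus (Cmult (m21 M) (m12 N)) (Cmult (m22 M) (m22 N))).
Definition comm (M N : M2) : M2 := msub (mmul M N) (mmul N M).
Definition madj (M : M2) : M2 :=
  mkM2 (Cconj (m11 M)) (Cconj (m21 M)) (Cconj (m12 M)) (Cconj (m22 M)).
Definition mtrace (M : M2) : C := Cplus (m11 M) (m22 M).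

Definition in_su2 (M : M2) : Prop := madj M = mscal (RtoC (-1)) M /\ mtrace M = RtoC 0.

Definition opnorm (M : M2) : R :=
  real (Lub_Rbar (fun r => exists v : V2, vnorm v = 1 /\ r = vnorm (mv M v))).

Definition smoothC (f : R3 -> C) : Prop :=
  smoothR (fun x => fst (f x)) /\ smoothR (fun x => snd (f x)).
Definition smoothM (F : R3 -> M2) : Prop :=
  smoothC (fun x => m11 (F x)) /\ smoothC (fun x => m12 (F x)) /\
  smoothC (fun x => m21 (F x)) /\ smoothC (fun x => m22 (F x)).
Definition pdC (i : nat) (f : R3 -> C) (x : R3) : C :=
  (pd i (fun y => fst (f y)) x, pd i (fun y => snd (f y)) x).
Definition pdM (i : nat) (F : R3 -> M2) (x : R3) : M2 :=
  mkM2 (pdC i (fun y => m11 (F y)) x) (pdC i (fun y => m12 (F y)) x)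
       (pdC i (fun y => m21 (F y)) x) (pdC i (fun y => m22 (F y)) x).

(* ---------- SU(2) monopoles (global unitary trivialisation E = R^3 x C^2) ----------
   The connection is nabla = d + sum_j A j dx_j with A j : R3 -> su(2), j = 0,1,2. *)
Definition covD (A : nat -> R3 -> M2) (Phi : R3 -> M2) (j : nat) (x : R3) : M2 :=
  madd (pdM j Phi x) (comm (A j x) (Phi x)).
Definition curv (A : nat -> R3 -> M2) (j k : nat) (x : R3) : M2 :=
  madd (msub (pdM j (A k) x) (pdM k (A j) x)) (comm (A j x) (A k x)).

Definition bogomolny (A : nat -> R3 -> M2) (Phi : R3 -> M2) : Prop :=
  forall x : R3,
    curv A 0 1 x = covD A Phi 2 x /\
    curv A 1 2 x = covD A Phi 0 x /\
    curv A 2 0 x = covD A Phi 1 x.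

Definition hitchin_bc (A : nat -> R3 -> M2) (Phi : R3 -> M2) (k : nat) (O : R3) : Prop :=
  exists R0 K : R, 0 < R0 /\
    forall x : R3, R0 <= norm3 (sub3 x O) ->
      Rabs (opnorm (Phi x) - (1 - INR k / (2 * norm3 (sub3 x O)))) <= K / norm3 (sub3 x O) ^ 2 /\
      opnorm (covD A Phi 0 x) + opnorm (covD A Phi 1 x) + opnorm (covD A Phi 2 x)
        <= K / norm3 (sub3 x O) ^ 2.

Definition monopole (A : nat -> R3 -> M2) (Phi : R3 -> M2) (k : nat) (O : R3) : Prop :=
  (forall j : nat, (j < 3)%nat -> smoothM (A j) /\ forall x, in_su2 (A j x)) /\
  smoothM Phi /\ (forall x, in_su2 (Phi x)) /\
  bogomolny A Phi /\ hitchin_bc A Phi k O.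

Definition line (x u : R3) (t : R) : R3 := add3 x (scal3 t u).
Definition Adir (A : nat -> R3 -> M2) (u : R3) (y : R3) : M2 :=
  madd (madd (mscal (RtoC (coord 0 u)) (A 0%nat y)) (mscal (RtoC (coord 1 u)) (A 1%nat y)))
       (mscal (RtoC (coord 2 u)) (A 2%nat y)).
Definition ode_rhs (A : nat -> R3 -> M2) (Phi : R3 -> M2) (x u : R3) (s : R -> V2) (t : R) : V2 :=
  vsub (mv (mscal Ci (Phi (line x u t))) (s t)) (mv (Adir A u (line x u t)) (s t)).
Definition is_sol (A : nat -> R3 -> M2) (Phi : R3 -> M2) (x u : R3) (s : R -> V2) : Prop :=
  forall t : R,
    is_derive (K := R_AbsRing) (V := C_R_NormedModule) (fun t => fst (s t)) t
              (fst (ode_rhs A Phi x u s t)) /\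
    is_derive (K := R_AbsRing) (V := C_R_NormedModule) (fun t => snd (s t)) t
              (snd (ode_rhs A Phi x u s t)).

Definition decays_pos (s : R -> V2) : Prop := is_lim (fun t => vnorm (s t)) p_infty 0.
Definition decays_neg (s : R -> V2) : Prop := is_lim (fun t => vnorm (s t)) m_infty 0.

Definition spectral (A : nat -> R3 -> M2) (Phi : R3 -> M2) (x u : R3) : Prop :=
  exists s : R -> V2, is_sol A Phi x u s /\ s 0 <> vzero /\ decays_pos s /\ decays_neg s.

Definition Lplus (A : nat -> R3 -> M2) (Phi : R3 -> M2) (x u : R3) (v : V2) : Prop :=
  exists s : R -> V2, is_sol A Phi x u s /\ decays_pos s /\ s 0 = v.
Definition Lminus (A : nat -> R3 -> M2) (Phi : R3 -> M2) (x u : R3) (v : V2) : Prop :=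
  exists s : R -> V2, is_sol A Phi x u s /\ decays_neg s /\ s 0 = v.

From Stdlib Require Import Reals Lra Psatz Lia.
From Coquelicot Require Import Coquelicot.
Open Scope R_scope.

(* Far from [O] the Higgs field has norm between [1/2] and [2] and small covariant derivative.
   Along a solution [s] of [s' = i Phi s - A(u) s] put [N = |s|^2] and
   [q = Re <s, i Phi s>]. Then [N' = 2 q] and [q' = 2 |Phi|^2 N + Re <s, i (nabla_u Phi) s> >= N/4],
   while [|q| <= 2 N]; hence both [q + N/16] and [q - N/16] are nondecreasing. Both tend to
   [0] at an end where [s] decays, so [q(0) <= - N(0)/16] on [L^+] and [q(0) >= N(0)/16]
   on [L^-]: the Hermitian form [Re <., i Phi(x) .>] is negative definite on [L^+] and
   positive definite on [L^-], uniformly. By polarization this bounds the angle between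
   [L^+] and [L^-] from below, giving [|a - b| <= 64 |a + b|] for [a] in [L^+], [b] in [L^-]. *)

(** * Directional derivatives in R^3 *)

Lemma add3_scal3_0 (z w : R3) : add3 z (scal3 0 w) = z.
Proof.
  destruct z as [[? ?] ?], w as [[? ?] ?]; unfold add3, scal3; cbn [fst snd].
  f_equal; [f_equal|]; ring.
Qed.

Lemma add3_scal3_plus (z w : R3) (c h : R) :
  add3 z (scal3 (c + h) w) = add3 (add3 z (scal3 c w)) (scal3 h w).
Proof.
  destruct z as [[? ?] ?], w as [[? ?] ?]; unfold add3, scal3; cbn [fst snd].
  f_equal; [f_equal|]; ring.
Qed.

Lemma add3_scal3_e0 (z0 z1 z2 t : R) : add3 (z0, z1, z2) (scal3 t (e3 0)) = (z0 + t, z1, z2).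
Proof. unfold add3, scal3, e3; cbn [fst snd]; f_equal; [f_equal|]; ring. Qed.

Lemma add3_scal3_e1 (z0 z1 z2 t : R) : add3 (z0, z1, z2) (scal3 t (e3 1)) = (z0, z1 + t, z2).
Proof. unfold add3, scal3, e3; cbn [fst snd]; f_equal; [f_equal|]; ring. Qed.

Lemma add3_scal3_e2 (z0 z1 z2 t : R) : add3 (z0, z1, z2) (scal3 t (e3 2)) = (z0, z1, z2 + t).
Proof. unfold add3, scal3, e3; cbn [fst snd]; f_equal; [f_equal|]; ring. Qed.

Lemma is_derive_shift (g : R -> R) (c l : R) :
  is_derive (fun h => g (c + h)) 0 l -> is_derive g c l.
Proof.
  intros H. replace l with (1 * l) by ring.
  apply (is_derive_ext (fun s => g (c + (s - c)))).
  { intros s. f_equal. ring. }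
  apply (is_derive_comp (fun h => g (c + h)) (fun s => s - c)).
  - replace (c - c) with 0 by ring. exact H.
  - auto_derive; auto; ring.
Qed.

Lemma is_derive_axis (f : R3 -> R) (i : nat) (z : R3) (c : R) :
  (forall w, ex_derive (fun t => f (add3 w (scal3 t (e3 i)))) 0) ->
  is_derive (fun s => f (add3 z (scal3 s (e3 i)))) c (pd i f (add3 z (scal3 c (e3 i)))).
Proof.
  intros Hex. apply is_derive_shift.
  eapply is_derive_ext; [|exact (Derive_correct _ _ (Hex (add3 z (scal3 c (e3 i)))))].
  intros h. cbv beta. now rewrite add3_scal3_plus.
Qed.

Lemma axis_increment_error (f : R3 -> R) (i : nat) (z : R3) (a c eps : R) :
  (forall w, ex_derive (fun t => f (add3 w (scal3 t (e3 i)))) 0) ->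
  (forall th, Rabs th <= Rabs a -> Rabs (pd i f (add3 z (scal3 th (e3 i))) - c) <= eps) ->
  Rabs (f (add3 z (scal3 a (e3 i))) - f z - a * c) <= Rabs a * eps.
Proof.
  intros Hex Hpd.
  destruct (MVT_cor4 (fun s => f (add3 z (scal3 s (e3 i))))
              (fun s => pd i f (add3 z (scal3 s (e3 i)))) 0 (Rabs a))
    with (b := a) as [th [Hmvt Hth]].
  - intros th _. now apply is_derive_axis.
  - rewrite Rminus_0_r. lra.
  - rewrite add3_scal3_0, !Rminus_0_r in *. rewrite Hmvt.
    replace (_ * a - a * c) with (a * (pd i f (add3 z (scal3 th (e3 i))) - c)) by ring.
    rewrite Rabs_mult. apply Rmult_le_compat_l; [apply Rabs_pos|]. now apply Hpd.
Qed.

Lemma continuous_R3_components (F : R3 -> R) (y0 y1 y2 eps : R) :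
  continuous F (y0, y1, y2) -> 0 < eps ->
  exists d, 0 < d /\ forall z0 z1 z2 : R,
    Rabs (z0 - y0) < d -> Rabs (z1 - y1) < d -> Rabs (z2 - y2) < d ->
    Rabs (F (z0, z1, z2) - F (y0, y1, y2)) < eps.
Proof.
  intros Hc Heps.
  destruct (proj1 (filterlim_locally F _) Hc (mkposreal eps Heps)) as [d Hd].
  exists d. split; [apply cond_pos|]. intros z0 z1 z2 H0 H1 H2.
  apply (Hd (z0, z1, z2)). split; [split|]; assumption.
Qed.

Definition dir_deriv (f : R3 -> R) (u y : R3) : R :=
  coord 0 u * pd 0 f y + coord 1 u * pd 1 f y + coord 2 u * pd 2 f y.

(* The increment along [h u] is split into three axis-parallel steps. *)
Lemma increment_error_3d (f : R3 -> R) (y0 y1 y2 u0 u1 u2 h m e : R) :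
  (forall i w, ex_derive (fun t => f (add3 w (scal3 t (e3 i)))) 0) ->
  (forall i z0 z1 z2, (i < 3)%nat ->
     Rabs (z0 - y0) < m -> Rabs (z1 - y1) < m -> Rabs (z2 - y2) < m ->
     Rabs (pd i f (z0, z1, z2) - pd i f (y0, y1, y2)) <= e) ->
  Rabs (h * u0) < m -> Rabs (h * u1) < m -> Rabs (h * u2) < m ->
  Rabs (f (y0 + h * u0, y1 + h * u1, y2 + h * u2) - f (y0, y1, y2)
        - h * (u0 * pd 0 f (y0, y1, y2) + u1 * pd 1 f (y0, y1, y2) + u2 * pd 2 f (y0, y1, y2)))
  <= (Rabs (h * u0) + Rabs (h * u1) + Rabs (h * u2)) * e.
Proof.
  intros Hex Hnear Hu0 Hu1 Hu2.
  assert (Hm : 0 < m) by (pose proof (Rabs_pos (h * u0)); lra).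
  assert (E0 : Rabs (f (y0 + h * u0, y1, y2) - f (y0, y1, y2) - h * u0 * pd 0 f (y0, y1, y2))
               <= Rabs (h * u0) * e).
  { rewrite <- add3_scal3_e0. apply axis_increment_error; [apply Hex|].
    intros th Hth. rewrite add3_scal3_e0. apply Hnear; [auto| | |];
      ring_simplify (y0 + th - y0); rewrite ?Rminus_diag, ?Rabs_R0; lra. }
  assert (E1 : Rabs (f (y0 + h * u0, y1 + h * u1, y2) - f (y0 + h * u0, y1, y2)
                     - h * u1 * pd 1 f (y0, y1, y2)) <= Rabs (h * u1) * e).
  { rewrite <- add3_scal3_e1. apply axis_increment_error; [apply Hex|].
    intros th Hth. rewrite add3_scal3_e1. apply Hnear; [auto| | |];
      ring_simplify (y0 + h * u0 - y0); ring_simplify (y1 + th - y1); rewrite ?Rminus_diag, ?Rabs_R0; lra. }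
  assert (E2 : Rabs (f (y0 + h * u0, y1 + h * u1, y2 + h * u2) - f (y0 + h * u0, y1 + h * u1, y2)
                     - h * u2 * pd 2 f (y0, y1, y2)) <= Rabs (h * u2) * e).
  { rewrite <- add3_scal3_e2. apply axis_increment_error; [apply Hex|].
    intros th Hth. rewrite add3_scal3_e2. apply Hnear; [auto| | |];
      ring_simplify (y0 + h * u0 - y0); ring_simplify (y1 + h * u1 - y1);
      ring_simplify (y2 + th - y2); lra. }
  match goal with |- Rabs ?X <= _ =>
    replace X with (f (y0 + h * u0, y1 + h * u1, y2 + h * u2) - f (y0 + h * u0, y1 + h * u1, y2)
                    - h * u2 * pd 2 f (y0, y1, y2)
                    + (f (y0 + h * u0, y1 + h * u1, y2) - f (y0 + h * u0, y1, y2) - h * u1 * pd 1 f (y0, y1, y2)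
                       + (f (y0 + h * u0, y1, y2) - f (y0, y1, y2) - h * u0 * pd 0 f (y0, y1, y2)))) by ring end.
  eapply Rle_trans; [apply Rabs_triang|].
  eapply Rle_trans; [apply Rplus_le_compat_l, Rabs_triang|].
  lra.
Qed.

Lemma is_derive_dir_deriv_0 (f : R3 -> R) (y u : R3) :
  (forall i w, ex_derive (fun t => f (add3 w (scal3 t (e3 i)))) 0) ->
  (forall i, continuous (pd i f) y) ->
  is_derive (fun h => f (add3 y (scal3 h u))) 0 (dir_deriv f u y).
Proof.
  intros Hex Hc. apply is_derive_Reals. intros eps Heps.
  destruct y as [[y0 y1] y2], u as [[u0 u1] u2]. unfold dir_deriv; cbn [coord fst snd].
  pose proof (Rabs_pos u0); pose proof (Rabs_pos u1); pose proof (Rabs_pos u2).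
  set (U := 1 + Rabs u0 + Rabs u1 + Rabs u2).
  set (e := eps / (2 * U)).
  assert (He : 0 < e) by (apply Rdiv_lt_0_compat; unfold U; lra).
  destruct (continuous_R3_components _ _ _ _ e (Hc 0%nat) He) as [d0 [Hd0 C0]].
  destruct (continuous_R3_components _ _ _ _ e (Hc 1%nat) He) as [d1 [Hd1 C1]].
  destruct (continuous_R3_components _ _ _ _ e (Hc 2%nat) He) as [d2 [Hd2 C2]].
  set (m := Rmin d0 (Rmin d1 d2)).
  assert (Hm0 : m <= d0) by apply Rmin_l.
  assert (Hm1 : m <= d1) by (eapply Rle_trans; [apply Rmin_r|apply Rmin_l]).
  assert (Hm2 : m <= d2) by (eapply Rle_trans; [apply Rmin_r|apply Rmin_r]).
  assert (Hnear : forall i z0 z1 z2, (i < 3)%nat ->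
            Rabs (z0 - y0) < m -> Rabs (z1 - y1) < m -> Rabs (z2 - y2) < m ->
            Rabs (pd i f (z0, z1, z2) - pd i f (y0, y1, y2)) <= e).
  { intros [|[|[|i]]] z0 z1 z2 Hi ? ? ?; [apply Rlt_le, C0|apply Rlt_le, C1|apply Rlt_le, C2|lia]; lra. }
  assert (Hdelta : 0 < m / U) by (apply Rdiv_lt_0_compat; [repeat apply Rmin_pos|unfold U]; lra).
  exists (mkposreal _ Hdelta). intros h Hh0 Hh. cbn [pos] in Hh.
  assert (HhU : Rabs h * U < m).
  { apply (Rmult_lt_compat_r U) in Hh; [|unfold U; lra].
    unfold Rdiv in Hh. rewrite Rmult_assoc, Rinv_l in Hh; unfold U in *; lra. }
  assert (Hhu : forall w, Rabs w <= U - 1 -> Rabs (h * w) < m).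
  { intros w Hw. rewrite Rabs_mult. pose proof (Rabs_pos h). nra. }
  pose proof (increment_error_3d f y0 y1 y2 u0 u1 u2 h m e Hex Hnear
                (Hhu u0 ltac:(unfold U; lra)) (Hhu u1 ltac:(unfold U; lra)) (Hhu u2 ltac:(unfold U; lra)))
    as Hinc.
  rewrite !Rabs_mult in Hinc.
  rewrite Rplus_0_l, add3_scal3_0.
  change (add3 (y0, y1, y2) (scal3 h (u0, u1, u2))) with (y0 + h * u0, y1 + h * u1, y2 + h * u2).
  match goal with |- Rabs ((?F3 - ?F0) / h - ?L) < _ =>
    replace ((F3 - F0) / h - L) with ((F3 - F0 - h * L) / h) by (field; exact Hh0) end.
  rewrite Rabs_div by exact Hh0.
  assert (Habs : 0 < Rabs h) by (apply Rabs_pos_lt; exact Hh0).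
  apply (Rle_lt_trans _ (U * e)).
  - apply (Rmult_le_reg_r (Rabs h)); [exact Habs|]. unfold Rdiv. rewrite Rmult_assoc, Rinv_l by lra.
    unfold U. nra.
  - unfold e. replace (U * (eps / (2 * U))) with (eps / 2) by (field; unfold U; lra). lra.
Qed.

Lemma is_derive_along_line (f : R3 -> R) (x u : R3) (t : R) :
  smoothR f -> is_derive (fun t => f (line x u t)) t (dir_deriv f u (line x u t)).
Proof.
  intros Hs. apply is_derive_shift.
  eapply is_derive_ext; [|apply is_derive_dir_deriv_0].
  - intros h. cbv beta. unfold line. now rewrite add3_scal3_plus.
  - intros i w. exact (proj1 (Hs nil i w)).
  - intros i. exact (proj2 (Hs (cons i nil) 0%nat _)).
Qed.

(** * Derivatives of complex, vector and matrix valued curves *)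

Definition is_deriveC (z : R -> C) (t : R) (dz : C) : Prop :=
  is_derive (fun t => fst (z t)) t (fst dz) /\ is_derive (fun t => snd (z t)) t (snd dz).
Definition is_deriveV (v : R -> V2) (t : R) (dv : V2) : Prop :=
  is_deriveC (fun t => fst (v t)) t (fst dv) /\ is_deriveC (fun t => snd (v t)) t (snd dv).
Definition is_deriveM (M : R -> M2) (t : R) (dM : M2) : Prop :=
  is_deriveC (fun t => m11 (M t)) t (m11 dM) /\ is_deriveC (fun t => m12 (M t)) t (m12 dM) /\
  is_deriveC (fun t => m21 (M t)) t (m21 dM) /\ is_deriveC (fun t => m22 (M t)) t (m22 dM).

Lemma is_deriveC_of_is_derive (f : R -> C) (t : R) (l : C) :
  is_derive (K := R_AbsRing) (V := C_R_NormedModule) f t l -> is_deriveC f t l.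
Proof.
  intros H. split.
  - eapply filterdiff_ext_lin; [|intros y; reflexivity].
    apply (filterdiff_comp' (K := R_AbsRing) (U := R_NormedModule) (V := C_R_NormedModule)
             (W := R_NormedModule) f fst t _ fst H).
    apply filterdiff_linear, (is_linear_fst (U := R_NormedModule) (V := R_NormedModule)).
  - eapply filterdiff_ext_lin; [|intros y; reflexivity].
    apply (filterdiff_comp' (K := R_AbsRing) (U := R_NormedModule) (V := C_R_NormedModule)
             (W := R_NormedModule) f snd t _ snd H).
    apply filterdiff_linear, (is_linear_snd (U := R_NormedModule) (V := R_NormedModule)).
Qed.

Lemma is_derive_Rmult (f g : R -> R) (t df dg : R) :
  is_derive f t df -> is_derive g t dg -> is_derive (fun t => f t * g t) t (df * g t + f t * dg).
Proof. intros Hf Hg. apply (is_derive_mult f g t df dg Hf Hg), Rmult_comm. Qed.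

Lemma is_derive_eq_value (f : R -> R) (t d d' : R) : is_derive f t d -> d = d' -> is_derive f t d'.
Proof. now intros H <-. Qed.

Lemma is_deriveC_eq (z : R -> C) (t : R) (dz dz' : C) :
  is_deriveC z t dz -> dz = dz' -> is_deriveC z t dz'.
Proof. now intros H <-. Qed.

Lemma is_deriveC_const (c : C) (t : R) : is_deriveC (fun _ => c) t (RtoC 0).
Proof. split; exact (is_derive_const _ t). Qed.

Lemma is_deriveC_plus (z w : R -> C) (t : R) (dz dw : C) :
  is_deriveC z t dz -> is_deriveC w t dw ->
  is_deriveC (fun t => Cplus (z t) (w t)) t (Cplus dz dw).
Proof.
  intros [H1 H2] [H3 H4].
  split; [exact (is_derive_plus _ _ _ _ _ H1 H3) | exact (is_derive_plus _ _ _ _ _ H2 H4)].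
Qed.

Lemma is_deriveC_mult (z w : R -> C) (t : R) (dz dw : C) :
  is_deriveC z t dz -> is_deriveC w t dw ->
  is_deriveC (fun t => Cmult (z t) (w t)) t (Cplus (Cmult dz (w t)) (Cmult (z t) dw)).
Proof.
  intros [H1 H2] [H3 H4]. split.
  - eapply is_derive_eq_value.
    + exact (is_derive_minus _ _ _ _ _ (is_derive_Rmult _ _ _ _ _ H1 H3) (is_derive_Rmult _ _ _ _ _ H2 H4)).
    + cbn. ring.
  - eapply is_derive_eq_value.
    + exact (is_derive_plus _ _ _ _ _ (is_derive_Rmult _ _ _ _ _ H1 H4) (is_derive_Rmult _ _ _ _ _ H2 H3)).
    + cbn. ring.
Qed.

(* [Re <v, w>] for the Hermitian inner product of C^2, i.e. the dot product of R^4. *)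
Definition vdot (v w : V2) : R :=
  fst (fst v) * fst (fst w) + snd (fst v) * snd (fst w)
  + fst (snd v) * fst (snd w) + snd (snd v) * snd (snd w).

Ltac expand_C2 :=
  unfold comm, vsub, vadd, mv, mscal, madd, msub, mmul, madj, mtrace, vdot in *;
  cbn [Cminus Cplus Cmult Copp Ci RtoC Cconj fst snd m11 m12 m21 m22] in *.
Ltac solve_V2_eq := apply injective_projections; apply injective_projections; expand_C2; ring.
Ltac solve_M2_eq := expand_C2; f_equal; apply injective_projections; expand_C2; ring.
Ltac destruct_V2 v := destruct v as [[? ?] [? ?]].
Ltac destruct_M2 M := destruct M as [[? ?] [? ?] [? ?] [? ?]].
Ltac solve_C_eq := apply injective_projections; expand_C2; ring.

Lemma is_deriveV_mv (M : R -> M2) (v : R -> V2) (t : R) (dM : M2) (dv : V2) :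
  is_deriveM M t dM -> is_deriveV v t dv ->
  is_deriveV (fun t => mv (M t) (v t)) t (vadd (mv dM (v t)) (mv (M t) dv)).
Proof.
  intros [H11 [H12 [H21 H22]]] [H1 H2]. split.
  - eapply is_deriveC_eq; [apply is_deriveC_plus; apply is_deriveC_mult; eassumption|solve_C_eq].
  - eapply is_deriveC_eq; [apply is_deriveC_plus; apply is_deriveC_mult; eassumption|solve_C_eq].
Qed.

Lemma is_deriveM_mscal (c : C) (M : R -> M2) (t : R) (dM : M2) :
  is_deriveM M t dM -> is_deriveM (fun t => mscal c (M t)) t (mscal c dM).
Proof.
  intros [H11 [H12 [H21 H22]]].
  split; [|split; [|split]];
    (eapply is_deriveC_eq; [apply is_deriveC_mult; [apply is_deriveC_const|eassumption]|solve_C_eq]).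
Qed.

Lemma is_derive_vdot (v w : R -> V2) (t : R) (dv dw : V2) :
  is_deriveV v t dv -> is_deriveV w t dw ->
  is_derive (fun t => vdot (v t) (w t)) t (vdot dv (w t) + vdot (v t) dw).
Proof.
  intros [[H1 H2] [H3 H4]] [[H5 H6] [H7 H8]]. unfold vdot.
  eapply is_derive_eq_value.
  - exact (is_derive_plus _ _ _ _ _
            (is_derive_plus _ _ _ _ _
               (is_derive_plus _ _ _ _ _ (is_derive_Rmult _ _ _ _ _ H1 H5) (is_derive_Rmult _ _ _ _ _ H2 H6))
               (is_derive_Rmult _ _ _ _ _ H3 H7))
            (is_derive_Rmult _ _ _ _ _ H4 H8)).
  - cbn. ring.
Qed.

Definition dir_derivC (g : R3 -> C) (u y : R3) : C :=
  (dir_deriv (fun z => fst (g z)) u y, dir_deriv (fun z => snd (g z)) u y).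
Definition dir_derivM (F : R3 -> M2) (u y : R3) : M2 :=
  mkM2 (dir_derivC (fun z => m11 (F z)) u y) (dir_derivC (fun z => m12 (F z)) u y)
       (dir_derivC (fun z => m21 (F z)) u y) (dir_derivC (fun z => m22 (F z)) u y).

Lemma is_deriveM_along_line (F : R3 -> M2) (x u : R3) (t : R) :
  smoothM F -> is_deriveM (fun t => F (line x u t)) t (dir_derivM F u (line x u t)).
Proof.
  intros [[? ?] [[? ?] [[? ?] [? ?]]]].
  repeat split; apply (is_derive_along_line (fun z => _ (_ (F z)))); assumption.
Qed.

Lemma is_deriveV_sol (A : nat -> R3 -> M2) (Phi : R3 -> M2) (x u : R3) (s : R -> V2) (t : R) :
  is_sol A Phi x u s -> is_deriveV s t (ode_rhs A Phi x u s t).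
Proof. intros H. destruct (H t) as [H1 H2]. split; now apply is_deriveC_of_is_derive. Qed.

(** * The Lie algebra su(2) and the real inner product on C^2 *)

Lemma in_su2_form (M : M2) :
  in_su2 M -> exists a b c, M = mkM2 (0, a) (b, c) (- b, c) (0, - a).
Proof.
  destruct M as [[a1 a2] [b1 b2] [c1 c2] [d1 d2]]. intros [Hadj Htr].
  unfold madj, mscal, mtrace in *. cbn [m11 m12 m21 m22] in *.
  injection Hadj. injection Htr. unfold Cplus, Cmult, Cconj, RtoC. cbn [fst snd]. intros.
  exists a2, b1, b2. f_equal; f_equal; lra.
Qed.

Lemma in_su2_mkM2 (a b c : R) : in_su2 (mkM2 (0, a) (b, c) (- b, c) (0, - a)).
Proof.
  split; unfold madj, mscal, mtrace; cbn [m11 m12 m21 m22];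
    unfold Cplus, Cmult, Cconj, RtoC; cbn [fst snd]; f_equal; try f_equal; ring.
Qed.

Lemma in_su2_madd (M N : M2) : in_su2 M -> in_su2 N -> in_su2 (madd M N).
Proof.
  intros HM HN. destruct (in_su2_form M HM) as [a [b [c ->]]], (in_su2_form N HN) as [a' [b' [c' ->]]].
  replace (madd _ _) with (mkM2 (0, a + a') (b + b', c + c') (- (b + b'), c + c') (0, - (a + a')))
    by (unfold madd, Cplus; cbn [fst snd m11 m12 m21 m22]; f_equal; f_equal; ring).
  apply in_su2_mkM2.
Qed.

Lemma in_su2_mscal (r : R) (M : M2) : in_su2 M -> in_su2 (mscal (RtoC r) M).
Proof.
  intros HM. destruct (in_su2_form M HM) as [a [b [c ->]]].
  replace (mscal _ _) with (mkM2 (0, r * a) (r * b, r * c) (- (r * b), r * c) (0, - (r * a)))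
    by (unfold mscal, Cmult, RtoC; cbn [fst snd m11 m12 m21 m22]; f_equal; f_equal; ring).
  apply in_su2_mkM2.
Qed.

Lemma in_su2_Adir (A : nat -> R3 -> M2) (u y : R3) :
  (forall j, (j < 3)%nat -> in_su2 (A j y)) -> in_su2 (Adir A u y).
Proof. intros H. unfold Adir. repeat apply in_su2_madd; apply in_su2_mscal, H; auto. Qed.

(* For [M] in su(2), [M * M = - su2_norm2 M]. *)
Definition su2_norm2 (M : M2) : R := snd (m11 M) ^ 2 + fst (m12 M) ^ 2 + snd (m12 M) ^ 2.

Lemma su2_norm2_nonneg (M : M2) : 0 <= su2_norm2 M.
Proof. unfold su2_norm2. nra. Qed.

Lemma vdot_sym (v w : V2) : vdot v w = vdot w v.
Proof. unfold vdot. ring. Qed.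

Lemma vdot_vsub_l (v w z : V2) : vdot (vsub v w) z = vdot v z - vdot w z.
Proof. destruct_V2 v; destruct_V2 w; destruct_V2 z. expand_C2. ring. Qed.

Lemma vdot_vsub_r (v w z : V2) : vdot z (vsub v w) = vdot z v - vdot z w.
Proof. destruct_V2 v; destruct_V2 w; destruct_V2 z. expand_C2. ring. Qed.

Lemma vdot_vadd_r (v w z : V2) : vdot z (vadd v w) = vdot z v + vdot z w.
Proof. destruct_V2 v; destruct_V2 w; destruct_V2 z. expand_C2. ring. Qed.

Lemma mv_vsub (M : M2) (v w : V2) : mv M (vsub v w) = vsub (mv M v) (mv M w).
Proof.
  destruct_M2 M; destruct_V2 v; destruct_V2 w. solve_V2_eq.
Qed.

Lemma mv_madd (M N : M2) (v : V2) : mv (madd M N) v = vadd (mv M v) (mv N v).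
Proof.
  destruct_M2 M; destruct_M2 N; destruct_V2 v. solve_V2_eq.
Qed.

Lemma mscal_madd (c : C) (M N : M2) : mscal c (madd M N) = madd (mscal c M) (mscal c N).
Proof. destruct c; destruct_M2 M; destruct_M2 N. solve_M2_eq. Qed.

Lemma vdot_mv_su2_skew (M : M2) (w : V2) : in_su2 M -> vdot w (mv M w) = 0.
Proof. intros HM. destruct (in_su2_form M HM) as [a [b [c ->]]]. destruct_V2 w. expand_C2. ring. Qed.

Lemma vdot_Ci_su2_selfadj (P : M2) (v w : V2) :
  in_su2 P -> vdot v (mv (mscal Ci P) w) = vdot (mv (mscal Ci P) v) w.
Proof.
  intros HP. destruct (in_su2_form P HP) as [a [b [c ->]]]. destruct_V2 v; destruct_V2 w.
  expand_C2. ring.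
Qed.

Lemma vdot_mv_su2 (P : M2) (w : V2) :
  in_su2 P -> vdot (mv P w) (mv P w) = su2_norm2 P * vdot w w.
Proof.
  intros HP. destruct (in_su2_form P HP) as [a [b [c ->]]]. destruct_V2 w.
  unfold su2_norm2. expand_C2. ring.
Qed.

Lemma vdot_mv_Ci (M : M2) (w : V2) :
  vdot (mv (mscal Ci M) w) (mv (mscal Ci M) w) = vdot (mv M w) (mv M w).
Proof. destruct_M2 M; destruct_V2 w. expand_C2. ring. Qed.

Lemma vdot_Ci_comm (A P : M2) (w : V2) : in_su2 A -> in_su2 P ->
  - vdot (mv A w) (mv (mscal Ci P) w) - vdot w (mv (mscal Ci P) (mv A w))
  = vdot w (mv (mscal Ci (comm A P)) w).
Proof.
  intros HA HP. destruct (in_su2_form A HA) as [a [b [c ->]]], (in_su2_form P HP) as [p [q [r ->]]].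
  destruct_V2 w. expand_C2. ring.
Qed.

Lemma vdot_Ci_polarization (P : M2) (a b : V2) : in_su2 P ->
  vdot a (mv (mscal Ci P) a) - vdot b (mv (mscal Ci P) b)
  = vdot (vadd a b) (mv (mscal Ci P) (vsub a b)).
Proof.
  intros HP. destruct (in_su2_form P HP) as [p [q [r ->]]]. destruct_V2 a; destruct_V2 b.
  expand_C2. ring.
Qed.

(** * Norms *)

Lemma vdot_nonneg (v : V2) : 0 <= vdot v v.
Proof. destruct_V2 v. unfold vdot; cbn [fst snd]. nra. Qed.

Lemma vnorm_sqrt_vdot (v : V2) : vnorm v = sqrt (vdot v v).
Proof.
  destruct_V2 v. unfold vnorm, Cmod, vdot; cbn [fst snd].
  rewrite !pow2_sqrt by nra. f_equal. ring.
Qed.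

Lemma vnorm_nonneg (v : V2) : 0 <= vnorm v.
Proof. rewrite vnorm_sqrt_vdot. apply sqrt_pos. Qed.

Lemma vnorm_sqr (v : V2) : vnorm v * vnorm v = vdot v v.
Proof. rewrite vnorm_sqrt_vdot. apply sqrt_sqrt, vdot_nonneg. Qed.

Lemma vdot_Cauchy_Schwarz (v w : V2) : Rabs (vdot v w) <= vnorm v * vnorm w.
Proof.
  apply Rsqr_incr_0_var; [|apply Rmult_le_pos; apply vnorm_nonneg].
  rewrite <- Rsqr_abs. unfold Rsqr.
  replace (vnorm v * vnorm w * (vnorm v * vnorm w)) with (vdot v v * vdot w w)
    by (rewrite <- !vnorm_sqr; ring).
  destruct_V2 v; destruct_V2 w. unfold vdot; cbn [fst snd].
  (* Lagrange's identity in R^4 *)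
  match goal with |- _ <= (?a * ?a + ?b * ?b + ?c * ?c + ?d * ?d) * (?e * ?e + ?f * ?f + ?g * ?g + ?h * ?h) =>
    assert (0 <= (a*f - b*e)^2 + (a*g - c*e)^2 + (a*h - d*e)^2 + (b*g - c*f)^2 + (b*h - d*f)^2 + (c*h - d*g)^2)
      by (repeat apply Rplus_le_le_0_compat; apply pow2_ge_0) end.
  nra.
Qed.

Definition frob2 (M : M2) : R :=
  vdot (m11 M, m12 M) (m11 M, m12 M) + vdot (m21 M, m22 M) (m21 M, m22 M).

Lemma vdot_mv_le_frob2 (M : M2) (v : V2) : vdot (mv M v) (mv M v) <= frob2 M * vdot v v.
Proof.
  destruct_M2 M; destruct_V2 v. unfold frob2. expand_C2.
  (* Row by row: [|a x + b y|^2 + |a conj(y) - b conj(x)|^2 = (|a|^2 + |b|^2) (|x|^2 + |y|^2)]. *)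
  match goal with |- _ <= (?p1*?p1 + ?p2*?p2 + ?p3*?p3 + ?p4*?p4 + (?p5*?p5 + ?p6*?p6 + ?p7*?p7 + ?p8*?p8))
                        * (?w1*?w1 + ?w2*?w2 + ?w3*?w3 + ?w4*?w4) =>
    assert (0 <= ((p1*w3 + p2*w4) - (p3*w1 + p4*w2))^2 + ((p2*w3 - p1*w4) - (p4*w1 - p3*w2))^2
               + ((p5*w3 + p6*w4) - (p7*w1 + p8*w2))^2 + ((p6*w3 - p5*w4) - (p8*w1 - p7*w2))^2)
      by (repeat apply Rplus_le_le_0_compat; apply pow2_ge_0) end.
  nra.
Qed.

Lemma vnorm_e1 : vnorm (RtoC 1, RtoC 0) = 1.
Proof.
  rewrite vnorm_sqrt_vdot. unfold vdot, RtoC; cbn [fst snd].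
  replace (1 * 1 + 0 * 0 + 0 * 0 + 0 * 0) with 1 by ring. apply sqrt_1.
Qed.

Lemma opnorm_unit_bound (M : M2) (w : V2) : vnorm w = 1 -> vnorm (mv M w) <= opnorm M.
Proof.
  intros Hw. unfold opnorm.
  set (E := fun r => exists v : V2, vnorm v = 1 /\ r = vnorm (mv M v)).
  assert (HE : E (vnorm (mv M w))) by (exists w; auto).
  assert (Hbound : is_ub_Rbar E (sqrt (frob2 M))).
  { intros r [v [Hv ->]]. cbn. rewrite vnorm_sqrt_vdot. apply sqrt_le_1_alt.
    pose proof (vdot_mv_le_frob2 M v) as Hfrob.
    rewrite <- (vnorm_sqr v), Hv, !Rmult_1_r in Hfrob. exact Hfrob. }
  destruct (Lub_Rbar_correct E) as [Hub Hlub].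
  destruct (Lub_Rbar E) as [l| |] eqn:El.
  - exact (Hub _ HE).
  - contradiction (Hlub _ Hbound).
  - contradiction (Hub _ HE).
Qed.

Definition vscale (c : R) (v : V2) : V2 := (Cmult (RtoC c) (fst v), Cmult (RtoC c) (snd v)).

Lemma vnorm_vscale (c : R) (v : V2) : vnorm (vscale c v) = Rabs c * vnorm v.
Proof.
  rewrite !vnorm_sqrt_vdot, <- sqrt_Rsqr_abs, <- sqrt_mult by (apply Rle_0_sqr || apply vdot_nonneg).
  f_equal. destruct_V2 v. unfold vscale, Rsqr. expand_C2. ring.
Qed.

Lemma mv_vscale (M : M2) (c : R) (v : V2) : mv M (vscale c v) = vscale c (mv M v).
Proof. destruct_M2 M; destruct_V2 v. unfold vscale. solve_V2_eq. Qed.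

Lemma opnorm_bound (M : M2) (v : V2) : vnorm (mv M v) <= opnorm M * vnorm v.
Proof.
  destruct (Req_dec (vnorm v) 0) as [Hv0|Hv0].
  - rewrite Hv0, Rmult_0_r. rewrite vnorm_sqrt_vdot in Hv0 |- *.
    apply sqrt_eq_0 in Hv0; [|apply vdot_nonneg].
    pose proof (vdot_mv_le_frob2 M v). pose proof (vdot_nonneg (mv M v)).
    rewrite Hv0, Rmult_0_r in H. replace (vdot (mv M v) (mv M v)) with 0 by lra.
    rewrite sqrt_0. apply Rle_refl.
  - assert (Hpos : 0 < vnorm v) by (pose proof (vnorm_nonneg v); lra).
    assert (Hunit : vnorm (vscale (/ vnorm v) v) = 1)
      by (rewrite vnorm_vscale, Rabs_pos_eq by (left; apply Rinv_0_lt_compat, Hpos); field; lra).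
    pose proof (opnorm_unit_bound M _ Hunit) as Hle.
    rewrite mv_vscale, vnorm_vscale, Rabs_pos_eq in Hle by (left; apply Rinv_0_lt_compat, Hpos).
    apply (Rmult_le_compat_r (vnorm v)) in Hle; [|lra].
    replace (/ vnorm v * vnorm (mv M v) * vnorm v) with (vnorm (mv M v)) in Hle by (field; lra).
    exact Hle.
Qed.

Lemma opnorm_nonneg (M : M2) : 0 <= opnorm M.
Proof.
  eapply Rle_trans; [apply vnorm_nonneg|]. apply (opnorm_unit_bound M _ vnorm_e1).
Qed.

Lemma opnorm_su2 (M : M2) : in_su2 M -> opnorm M = sqrt (su2_norm2 M).
Proof.
  intros HM.
  assert (Hval : forall w, vnorm w = 1 -> vnorm (mv M w) = sqrt (su2_norm2 M)).
  { intros w Hw. rewrite vnorm_sqrt_vdot, vdot_mv_su2 by exact HM.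
    rewrite <- (vnorm_sqr w), Hw, !Rmult_1_r. reflexivity. }
  unfold opnorm. rewrite (is_lub_Rbar_unique _ (sqrt (su2_norm2 M))); [reflexivity|]. split.
  - intros r [w [Hw ->]]. rewrite (Hval w Hw). apply Rle_refl.
  - intros b Hb. apply Hb. exists (RtoC 1, RtoC 0). split; [apply vnorm_e1|]. now rewrite Hval by apply vnorm_e1.
Qed.

(** * The Lyapunov function along a solution *)

Definition covD_dir (A : nat -> R3 -> M2) (Phi : R3 -> M2) (u y : R3) : M2 :=
  madd (madd (mscal (RtoC (coord 0 u)) (covD A Phi 0 y)) (mscal (RtoC (coord 1 u)) (covD A Phi 1 y)))
       (mscal (RtoC (coord 2 u)) (covD A Phi 2 y)).

Lemma covD_dir_eq (A : nat -> R3 -> M2) (Phi : R3 -> M2) (u y : R3) :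
  madd (dir_derivM Phi u y) (comm (Adir A u y) (Phi y)) = covD_dir A Phi u y.
Proof.
  unfold covD_dir, covD, Adir, dir_derivM, dir_derivC, dir_deriv, pdM, pdC.
  destruct (Phi y) as [[? ?] [? ?] [? ?] [? ?]].
  destruct (A 0%nat y) as [[? ?] [? ?] [? ?] [? ?]], (A 1%nat y) as [[? ?] [? ?] [? ?] [? ?]],
    (A 2%nat y) as [[? ?] [? ?] [? ?] [? ?]].
  solve_M2_eq.
Qed.

Lemma vdot_higgs_derivative (P P' A : M2) (w : V2) : in_su2 P -> in_su2 A ->
  vdot (vsub (mv (mscal Ci P) w) (mv A w)) (mv (mscal Ci P) w)
  + vdot w (vadd (mv (mscal Ci P') w) (mv (mscal Ci P) (vsub (mv (mscal Ci P) w) (mv A w))))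
  = 2 * su2_norm2 P * vdot w w + vdot w (mv (mscal Ci (madd P' (comm A P))) w).
Proof.
  intros HP HA.
  rewrite vdot_vsub_l, vdot_vadd_r, mv_vsub, vdot_vsub_r, mscal_madd, mv_madd, vdot_vadd_r,
    <- (vdot_Ci_comm A P w HA HP), (vdot_Ci_su2_selfadj P w (mv (mscal Ci P) w) HP),
    vdot_mv_Ci, vdot_mv_su2 by exact HP.
  ring.
Qed.

Lemma vdot_Ci_bound (M : M2) (w : V2) : Rabs (vdot w (mv (mscal Ci M) w)) <= opnorm M * vdot w w.
Proof.
  eapply Rle_trans; [apply vdot_Cauchy_Schwarz|].
  replace (vnorm (mv (mscal Ci M) w)) with (vnorm (mv M w)) by (rewrite !vnorm_sqrt_vdot, vdot_mv_Ci; reflexivity).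
  rewrite <- vnorm_sqr. pose proof (opnorm_bound M w). pose proof (vnorm_nonneg w). nra.
Qed.

Lemma vdot_Ci_su2_bound (P : M2) (w : V2) : in_su2 P -> su2_norm2 P <= 4 ->
  Rabs (vdot w (mv (mscal Ci P) w)) <= 2 * vdot w w.
Proof.
  intros HP Hle. eapply Rle_trans; [apply vdot_Ci_bound|].
  apply Rmult_le_compat_r; [apply vdot_nonneg|].
  rewrite opnorm_su2, <- (sqrt_pow2 2) by (assumption || lra). apply sqrt_le_1_alt. lra.
Qed.

Lemma vdot_Ci_mscal (r : R) (M : M2) (w : V2) :
  vdot w (mv (mscal Ci (mscal (RtoC r) M)) w) = r * vdot w (mv (mscal Ci M) w).
Proof. destruct_M2 M; destruct_V2 w. expand_C2. ring. Qed.

Lemma vdot_Ci_combination_bound (c0 c1 c2 : R) (M0 M1 M2 : M2) (w : V2) :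
  Rabs c0 <= 1 -> Rabs c1 <= 1 -> Rabs c2 <= 1 ->
  Rabs (vdot w (mv (mscal Ci (madd (madd (mscal (RtoC c0) M0) (mscal (RtoC c1) M1)) (mscal (RtoC c2) M2))) w))
  <= (opnorm M0 + opnorm M1 + opnorm M2) * vdot w w.
Proof.
  intros H0 H1 H2. rewrite !mscal_madd, !mv_madd, !vdot_vadd_r, !vdot_Ci_mscal.
  assert (Hterm : forall c M, Rabs c <= 1 -> Rabs (c * vdot w (mv (mscal Ci M) w)) <= opnorm M * vdot w w).
  { intros c M Hc. rewrite Rabs_mult.
    pose proof (vdot_Ci_bound M w). pose proof (opnorm_nonneg M). pose proof (vdot_nonneg w).
    pose proof (Rabs_pos c). pose proof (Rabs_pos (vdot w (mv (mscal Ci M) w))). nra. }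
  pose proof (Hterm _ M0 H0). pose proof (Hterm _ M1 H1). pose proof (Hterm _ M2 H2).
  eapply Rle_trans; [apply Rabs_triang|]. eapply Rle_trans; [apply Rplus_le_compat_r, Rabs_triang|].
  lra.
Qed.

Lemma nondecreasing_of_derive_nonneg (f df : R -> R) :
  (forall t, is_derive f t (df t)) -> (forall t, 0 <= df t) -> forall a b, a <= b -> f a <= f b.
Proof.
  intros Hd Hpos a b Hab.
  destruct (MVT_cor4 f df a (b - a)) with (b := b) as [c [Hc _]].
  - intros; apply Hd.
  - rewrite Rabs_pos_eq; lra.
  - pose proof (Hpos c). nra.
Qed.

Lemma nondecreasing_le_lim_pinfty (f : R -> R) (l : R) :
  (forall a b, a <= b -> f a <= f b) -> is_lim f p_infty l -> forall a, f a <= l.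
Proof.
  intros Hmono Hlim a.
  refine (is_lim_le_loc (fun _ => f a) f p_infty (f a) l _ (is_lim_const _ _) Hlim).
  exists a. intros t Ht. apply Hmono. lra.
Qed.

Lemma nondecreasing_ge_lim_minfty (f : R -> R) (l : R) :
  (forall a b, a <= b -> f a <= f b) -> is_lim f m_infty l -> forall a, l <= f a.
Proof.
  intros Hmono Hlim a.
  refine (is_lim_le_loc f (fun _ => f a) m_infty l (f a) _ Hlim (is_lim_const _ _)).
  exists a. intros t Ht. apply Hmono. lra.
Qed.

Lemma is_lim_0_of_sqr_bound (f g : R -> R) (x : Rbar) (c : R) :
  (forall t, Rabs (f t) <= c * g t ^ 2) -> is_lim g x 0 -> is_lim f x 0.
Proof.
  intros Hbound Hg.
  assert (Hsq : is_lim (fun t => c * g t ^ 2) x 0).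
  { replace (Finite 0) with (Rbar_mult c (Rbar_mult 0 0)) by (cbn; f_equal; ring).
    apply is_lim_scal_l. eapply is_lim_ext; [|apply (is_lim_mult _ _ _ _ _ Hg Hg); cbn; exact I].
    intros t. cbn. ring. }
  apply (is_lim_le_le_loc (fun t => - (c * g t ^ 2)) (fun t => c * g t ^ 2)).
  - apply filter_forall. intros t. specialize (Hbound t).
    pose proof (Rle_abs (f t)). pose proof (Rle_abs (- f t)). rewrite Rabs_Ropp in *. lra.
  - replace (Finite 0) with (Rbar_opp 0) by (cbn; f_equal; ring). now apply is_lim_opp.
  - exact Hsq.
Qed.

Lemma coord_abs_le_1 (u : R3) :
  norm3 u = 1 -> Rabs (coord 0 u) <= 1 /\ Rabs (coord 1 u) <= 1 /\ Rabs (coord 2 u) <= 1.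
Proof.
  intros Hu. destruct u as [[u0 u1] u2]. unfold norm3, dot3 in Hu; cbn [fst snd coord] in *.
  assert (Hsum : u0 * u0 + u1 * u1 + u2 * u2 = 1).
  { rewrite <- (sqrt_sqrt (u0 * u0 + u1 * u1 + u2 * u2)) by nra. rewrite Hu. ring. }
  repeat split; apply Rabs_le; split; nra.
Qed.

Section Along_a_solution.

Variables (A : nat -> R3 -> M2) (Phi : R3 -> M2) (x u : R3) (s : R -> V2).
Hypothesis HA : forall j y, (j < 3)%nat -> in_su2 (A j y).
Hypothesis HPhi : forall y, in_su2 (Phi y).
Hypothesis HPhi_smooth : smoothM Phi.
Hypothesis Hs : is_sol A Phi x u s.
Hypothesis Hu : norm3 u = 1.
Hypothesis Hhiggs : forall t, 1/4 <= su2_norm2 (Phi (line x u t)) <= 4.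
Hypothesis HcovD : forall t,
  opnorm (covD A Phi 0 (line x u t)) + opnorm (covD A Phi 1 (line x u t))
  + opnorm (covD A Phi 2 (line x u t)) <= 1/4.

Definition norm2_along (t : R) : R := vdot (s t) (s t).
Definition higgs_along (t : R) : R := vdot (s t) (mv (mscal Ci (Phi (line x u t))) (s t)).
Definition higgs_along_deriv (t : R) : R :=
  2 * su2_norm2 (Phi (line x u t)) * norm2_along t
  + vdot (s t) (mv (mscal Ci (covD_dir A Phi u (line x u t))) (s t)).

Lemma is_derive_norm2_along (t : R) : is_derive norm2_along t (2 * higgs_along t).
Proof.
  eapply is_derive_eq_value;
    [exact (is_derive_vdot s s t _ _ (is_deriveV_sol _ _ _ _ _ t Hs) (is_deriveV_sol _ _ _ _ _ t Hs))|].
  assert (Hskew := vdot_mv_su2_skew _ (s t) (in_su2_Adir A u (line x u t) (fun j Hj => HA j _ Hj))).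
  unfold ode_rhs, higgs_along.
  rewrite vdot_vsub_l, vdot_vsub_r, (vdot_sym (mv (Adir _ _ _) _)), (vdot_sym (mv (mscal Ci _) _)).
  lra.
Qed.

Lemma is_derive_higgs_along (t : R) : is_derive higgs_along t (higgs_along_deriv t).
Proof.
  eapply is_derive_eq_value.
  - exact (is_derive_vdot s _ t _ _ (is_deriveV_sol _ _ _ _ _ t Hs)
             (is_deriveV_mv _ _ t _ _ (is_deriveM_mscal Ci _ t _ (is_deriveM_along_line Phi x u t HPhi_smooth))
                (is_deriveV_sol _ _ _ _ _ t Hs))).
  - unfold ode_rhs, higgs_along_deriv, norm2_along. cbv beta.
    rewrite vdot_higgs_derivative, covD_dir_eq; [reflexivity|apply HPhi|].
    apply in_su2_Adir. intros j Hj. now apply HA.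
Qed.

Lemma higgs_along_abs (t : R) : Rabs (higgs_along t) <= 2 * norm2_along t.
Proof. apply vdot_Ci_su2_bound; [apply HPhi|apply Hhiggs]. Qed.

Lemma higgs_along_deriv_lb (t : R) : norm2_along t / 4 <= higgs_along_deriv t.
Proof.
  destruct (coord_abs_le_1 u Hu) as [H0 [H1 H2]].
  pose proof (vdot_Ci_combination_bound _ _ _ (covD A Phi 0 (line x u t)) (covD A Phi 1 (line x u t))
                (covD A Phi 2 (line x u t)) (s t) H0 H1 H2) as Hcov.
  fold (covD_dir A Phi u (line x u t)) in Hcov.
  pose proof (HcovD t). pose proof (Hhiggs t). pose proof (vdot_nonneg (s t)).
  pose proof (Rle_abs (- vdot (s t) (mv (mscal Ci (covD_dir A Phi u (line x u t))) (s t)))).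
  rewrite Rabs_Ropp in *. unfold higgs_along_deriv, norm2_along in *. nra.
Qed.

(* For [|c| <= 1], [higgs_along + c/16 * norm2_along] has derivative
   [higgs_along_deriv + c/8 * higgs_along >= N/4 - 2N/8 >= 0]. *)
Lemma higgs_along_shift_nondecreasing (c : R) : Rabs c <= 1 ->
  forall a b, a <= b ->
  higgs_along a + c / 16 * norm2_along a <= higgs_along b + c / 16 * norm2_along b.
Proof.
  intros Hc. apply (nondecreasing_of_derive_nonneg _
    (fun t => higgs_along_deriv t + c / 16 * (2 * higgs_along t))).
  - intros t. exact (is_derive_plus _ _ _ _ _ (is_derive_higgs_along t)
      (is_derive_scal _ _ (c / 16) _ (is_derive_norm2_along t))).
  - intros t. pose proof (higgs_along_deriv_lb t). pose proof (higgs_along_abs t).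
    assert (Habs : Rabs (c * higgs_along t) <= 2 * norm2_along t).
    { rewrite Rabs_mult. pose proof (Rabs_pos c). pose proof (Rabs_pos (higgs_along t)). nra. }
    pose proof (Rle_abs (- (c * higgs_along t))). rewrite Rabs_Ropp in *. lra.
Qed.

Lemma higgs_along_shift_lim (c : R) (l : Rbar) : Rabs c <= 1 ->
  is_lim (fun t => vnorm (s t)) l 0 ->
  is_lim (fun t => higgs_along t + c / 16 * norm2_along t) l 0.
Proof.
  intros Hc. apply is_lim_0_of_sqr_bound with (c := 3). intros t.
  replace (vnorm (s t) ^ 2) with (norm2_along t) by (unfold norm2_along; rewrite <- vnorm_sqr; ring).
  pose proof (higgs_along_abs t). pose proof (vdot_nonneg (s t)). fold (norm2_along t) in *.
  eapply Rle_trans; [apply Rabs_triang|]. rewrite Rabs_mult, (Rabs_pos_eq (norm2_along t)) by lra.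
  unfold Rdiv. rewrite Rabs_mult, (Rabs_pos_eq (/ 16)) by lra.
  pose proof (Rabs_pos c). nra.
Qed.

Lemma higgs_along_decays_pos :
  decays_pos s -> higgs_along 0 <= - (1 / 16) * norm2_along 0.
Proof.
  intros Hd. assert (H1 : Rabs 1 <= 1) by (rewrite Rabs_R1; lra).
  pose proof (nondecreasing_le_lim_pinfty _ 0 (higgs_along_shift_nondecreasing 1 H1)
                (higgs_along_shift_lim 1 p_infty H1 Hd) 0).
  lra.
Qed.

Lemma higgs_along_decays_neg :
  decays_neg s -> 1 / 16 * norm2_along 0 <= higgs_along 0.
Proof.
  intros Hd. assert (H1 : Rabs (-1) <= 1) by (rewrite Rabs_left; lra).
  pose proof (nondecreasing_ge_lim_minfty _ 0 (higgs_along_shift_nondecreasing (-1) H1)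
                (higgs_along_shift_lim (-1) m_infty H1 Hd) 0).
  lra.
Qed.

End Along_a_solution.

(** * Far from O *)

Lemma vnorm_vsub_le_vadd (P : M2) (a b : V2) : in_su2 P -> su2_norm2 P <= 4 ->
  vdot a (mv (mscal Ci P) a) <= - (1 / 16) * vdot a a ->
  1 / 16 * vdot b b <= vdot b (mv (mscal Ci P) b) ->
  vnorm (vsub a b) <= 64 * vnorm (vadd a b).
Proof.
  intros HP Hle Ha Hb.
  pose proof (vdot_Ci_polarization P a b HP) as Hpol.
  assert (Hpar : vdot (vadd a b) (vadd a b) + vdot (vsub a b) (vsub a b) = 2 * (vdot a a + vdot b b))
    by (destruct_V2 a; destruct_V2 b; expand_C2; ring).
  assert (HZ : vnorm (mv (mscal Ci P) (vsub a b)) * vnorm (mv (mscal Ci P) (vsub a b))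
               = su2_norm2 P * (vnorm (vsub a b) * vnorm (vsub a b)))
    by (rewrite !vnorm_sqr, vdot_mv_Ci, vdot_mv_su2 by exact HP; reflexivity).
  pose proof (vnorm_nonneg (vadd a b)). pose proof (vnorm_nonneg (vsub a b)).
  pose proof (vnorm_nonneg (mv (mscal Ci P) (vsub a b))). pose proof (su2_norm2_nonneg P).
  pose proof (vdot_Cauchy_Schwarz (vadd a b) (mv (mscal Ci P) (vsub a b))) as HCS.
  pose proof (Rle_abs (- vdot (vadd a b) (mv (mscal Ci P) (vsub a b)))). rewrite Rabs_Ropp in *.
  rewrite <- (vnorm_sqr (vadd a b)), <- (vnorm_sqr (vsub a b)) in Hpar.
  set (V := vnorm (vadd a b)) in *. set (W := vnorm (vsub a b)) in *.
  set (Z := vnorm (mv (mscal Ci P) (vsub a b))) in *.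
  assert (HZW : Z <= 2 * W) by nra.
  (* [(V^2 + W^2) / 32 <= - Re <a + b, i P (a - b)> <= V Z <= 2 V W] forces [W <= 64 V]. *)
  nra.
Qed.

Lemma norm3_sub_line_ge (x u O : R3) (t : R) : norm3 u = 1 -> dot3 (sub3 x O) u = 0 ->
  norm3 (sub3 x O) <= norm3 (sub3 (line x u t) O).
Proof.
  intros Hu Hperp. unfold norm3 in *. apply sqrt_le_1_alt.
  assert (Huu : dot3 u u = 1).
  { assert (0 <= dot3 u u) by (destruct u as [[? ?] ?]; unfold dot3; cbn [fst snd]; nra).
    rewrite <- (sqrt_sqrt (dot3 u u)) by assumption. rewrite Hu. ring. }
  replace (dot3 (sub3 (line x u t) O) (sub3 (line x u t) O))
    with (dot3 (sub3 x O) (sub3 x O) + 2 * t * dot3 (sub3 x O) u + t * t * dot3 u u)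
    by (destruct x as [[? ?] ?], u as [[? ?] ?], O as [[? ?] ?];
        unfold line, dot3, sub3, add3, scal3; cbn [fst snd]; ring).
  rewrite Hperp, Huu. nra.
Qed.

Lemma hitchin_error_small (k K r : R) : 0 <= k -> 2 * k + 4 * Rabs K + 4 <= r ->
  0 <= k / (2 * r) <= 1 / 4 /\ K / r ^ 2 <= 1 / 16.
Proof.
  intros Hk Hr. pose proof (Rabs_pos K). pose proof (Rle_abs K).
  assert (Hr2 : 0 < r ^ 2) by (apply pow_lt; lra).
  repeat split.
  - apply Rdiv_le_0_compat; lra.
  - apply (Rmult_le_reg_r (2 * r)); [lra|]. unfold Rdiv. rewrite Rmult_assoc, Rinv_l by lra. lra.
  - apply (Rmult_le_reg_r (r ^ 2)); [exact Hr2|]. unfold Rdiv. rewrite Rmult_assoc, Rinv_l by lra.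
    cbn. nra.
Qed.

Lemma hitchin_far_field (A : nat -> R3 -> M2) (Phi : R3 -> M2) (k : nat) (O : R3) :
  (forall y, in_su2 (Phi y)) -> hitchin_bc A Phi k O ->
  exists Rr, 0 < Rr /\ forall y, Rr <= norm3 (sub3 y O) ->
    (1 / 4 <= su2_norm2 (Phi y) <= 4) /\
    opnorm (covD A Phi 0 y) + opnorm (covD A Phi 1 y) + opnorm (covD A Phi 2 y) <= 1 / 4.
Proof.
  intros HPhi [R0 [K [HR0 Hbc]]]. pose proof (pos_INR k). pose proof (Rabs_pos K).
  exists (R0 + 2 * INR k + 4 * Rabs K + 4). split; [lra|]. intros y Hy.
  destruct (Hbc y) as [Hnorm Hcov]; [lra|].
  destruct (hitchin_error_small (INR k) K (norm3 (sub3 y O))) as [Hk HK]; [assumption|lra|].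
  rewrite opnorm_su2 in Hnorm by apply HPhi.
  pose proof (Rle_abs (sqrt (su2_norm2 (Phi y)) - (1 - INR k / (2 * norm3 (sub3 y O))))).
  pose proof (Rle_abs (- (sqrt (su2_norm2 (Phi y)) - (1 - INR k / (2 * norm3 (sub3 y O)))))).
  rewrite Rabs_Ropp in *.
  assert (Hsqrt : 1 / 2 <= sqrt (su2_norm2 (Phi y)) <= 2) by lra.
  rewrite <- (sqrt_sqrt (su2_norm2 (Phi y))) by apply su2_norm2_nonneg.
  split; [split|]; nra.
Qed.

Theorem mainTheorem7 :
  forall (A : nat -> R3 -> M2) (Phi : R3 -> M2) (k : nat) (O : R3),
    (1 <= k)%nat ->
    monopole A Phi k O ->
    exists Rr Cc : R, 0 < Rr /\ 0 < Cc /\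
      forall x u : R3,
        norm3 u = 1 ->
        dot3 (sub3 x O) u = 0 ->
        ~ spectral A Phi x u ->
        Rr <= norm3 (sub3 x O) ->
        forall v a b : V2,
          Lplus A Phi x u a -> Lminus A Phi x u b -> v = vadd a b ->
          vnorm (vsub a b) <= Cc * vnorm v.
Proof.
  intros A Phi k O _ [HA_all [HPhi_smooth [HPhi [_ Hbc]]]].
  assert (HA : forall j y, (j < 3)%nat -> in_su2 (A j y)) by (intros j y Hj; exact (proj2 (HA_all j Hj) y)).
  destruct (hitchin_far_field A Phi k O HPhi Hbc) as [Rr [HRr Hfar]].
  exists Rr, 64. split; [exact HRr|split; [lra|]].
  intros x u Hu Hperp _ HxR v a b [sa [Hsa [Hda <-]]] [sb [Hsb [Hdb <-]]] ->.
  assert (Hline : forall t, (1 / 4 <= su2_norm2 (Phi (line x u t)) <= 4) /\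
    opnorm (covD A Phi 0 (line x u t)) + opnorm (covD A Phi 1 (line x u t))
    + opnorm (covD A Phi 2 (line x u t)) <= 1 / 4).
  { intros t. apply Hfar. eapply Rle_trans; [exact HxR|]. now apply norm3_sub_line_ge. }
  apply (vnorm_vsub_le_vadd (Phi (line x u 0))); [apply HPhi|apply (proj1 (Hline 0))| |].
  - exact (higgs_along_decays_pos A Phi x u sa HA HPhi HPhi_smooth Hsa Hu
             (fun t => proj1 (Hline t)) (fun t => proj2 (Hline t)) Hda).
  - exact (higgs_along_decays_neg A Phi x u sb HA HPhi HPhi_smooth Hsb Hu
             (fun t => proj1 (Hline t)) (fun t => proj2 (Hline t)) Hdb).
Qed.
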